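(* Consider the game $\widehat{\mathcal{G}}_4$ described in the context. The strategy profile $\sigma^*$, in which all decoy voters apply for slot $s_2$ and all real voters apply for slot $s_1$, is a Nash equilibrium of $\widehat{\mathcal{G}}_4$.
   Context: There is a finite set $N$ of citizens partitioned into $\bar k>1$ districts $N_1,\dots,N_{\bar k}$; district $N_k$ contains $n_k^R\ge1$ real voters and $n_k^D$ decoy voters, $n_k^R+n_k^D>1$ (common knowledge; individual types private). Real voters value their ballot at $V>0$, decoy voters at $0$. Fix $1\le q\le\bar k-1$ and $\varepsilon>0$. Each citizen applies for slot $s_1$ or $s_2$. For district $k$ let $m_k$ be its number of $s_1$-applicants and $\rho_k=m_k/n_k^R$; let $\rho$ be the $q$-th smallest of $\rho_1,\dots,\rho_{\bar k}$, $C=\{k:\rho_k<\rho\}$, $T=\{k:\rho_k=\rho\}$, $c=|C|$, $t=|T|$; all districts in $C$ are selected and $q-c$ districts of $T$ are selected uniformly at random; the others are non-selected. Prices offered: $s_1$ in a selected district $V+\varepsilon$; $s_2$ in a selected district $2\varepsilon$; $s_1$ in a non-selected district $\varepsilon$; $s_2$ in a non-selected district $2\varepsilon$. Each applicant sells iff the price strictly exceeds his valuation, and the adversary must buy. Hence a decoy voter's payoff is the (expected) price offered to him, and a real voter's payoff is $V+\varepsilon$ if he applied for $s_1$ and his district is selected and $V$ otherwise. $\widehat{\mathcal{G}}_4$ is the simultaneous-move game in which each citizen chooses $s_1$ or $s_2$ with these expected payoffs. *)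

From HB Require Import structures.
From mathcomp Require Import all_boot all_order all_algebra.
Set Implicit Arguments. Unset Strict Implicit. Unset Printing Implicit Defensive.
Import Order.TTheory GRing.Theory Num.Theory.
Local Open Scope ring_scope.

(* Citizens: a finite type N.  dist i = district of citizen i,
   real i = true iff i is a real voter (false: decoy voter).
   A strategy profile s : {ffun N -> bool}; s i = true means "applies for s1",
   s i = false means "applies for s2". *)

Section Game.
Variables (R : realFieldType) (N : finType) (kbar : nat).
Variables (dist : N -> 'I_kbar) (real : N -> bool) (q : nat) (V eps : R).

Definition nR (k : 'I_kbar) : nat := #|[set i | (dist i == k) && real i]|.
Definition nD (k : 'I_kbar) : nat := #|[set i | (dist i == k) && ~~ real i]|.

Definition m_app (s : {ffun N -> bool}) (k : 'I_kbar) : nat :=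
  #|[set i | (dist i == k) && s i]|.

Definition rho_k (s : {ffun N -> bool}) (k : 'I_kbar) : R :=
  (m_app s k)%:R / (nR k)%:R.

Definition rho_q (s : {ffun N -> bool}) : R :=
  nth 0 (sort <=%R [seq rho_k s k | k <- enum 'I_kbar]) q.-1.

Definition Cset (s : {ffun N -> bool}) : {set 'I_kbar} :=
  [set k | rho_k s k < rho_q s].
Definition Tset (s : {ffun N -> bool}) : {set 'I_kbar} :=
  [set k | rho_k s k == rho_q s].

(* probability that district k is selected: districts of C surely,
   q - c of the t districts of T uniformly at random *)
Definition sel_prob (s : {ffun N -> bool}) (k : 'I_kbar) : R :=
  if k \in Cset s then 1
  else if k \in Tset s then (q - #|Cset s|)%:R / (#|Tset s|)%:R
  else 0.

Definition payoff (s : {ffun N -> bool}) (i : N) : R :=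
  let p := sel_prob s (dist i) in
  if real i then
    (if s i then p * (V + eps) + (1 - p) * V else V)
  else
    (if s i then p * (V + eps) + (1 - p) * eps else 2 * eps).

Definition deviate (s : {ffun N -> bool}) (i : N) (a : bool) : {ffun N -> bool} :=
  [ffun j => if j == i then a else s j].

Definition nash_eq (s : {ffun N -> bool}) : Prop :=
  forall (i : N) (a : bool), payoff (deviate s i a) i <= payoff s i.

Definition sigma_star : {ffun N -> bool} := [ffun i => real i].

End Game.

From HB Require Import structures.
From mathcomp Require Import all_boot all_order all_algebra.
From mathcomp Require Import lra.
Import Order.TTheory GRing.Theory Num.Theory.
Local Open Scope ring_scope.

(* A real voter never earns less than [V], and earns exactly [V] on [s2], so he
   cannot gain by leaving [s1].  A decoy voter who switches to [s1] raises his
   district's ratio to [(n_k^R + 1) / n_k^R > 1] while every other district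
   stays at ratio [1]; as [q < kbar], the [q]-th smallest ratio is still [1],
   so his district is never selected and he gets [eps < 2 eps]. *)

Lemma nth_sort_nseq_rcons d (T : orderType d) (x0 c r : T) (s : seq T) n j :
  perm_eq s (rcons (nseq n c) r) -> (c <= r)%O -> (j < n)%N ->
  nth x0 (sort <=%O s) j = c.
Proof.
move=> s_perm c_le_r lt_jn.
have sorted_s : sorted <=%O (rcons (nseq n c) r).
  by elim: n {s_perm lt_jn} => [|[|n] IH] //=; rewrite ?andbT ?lexx.
rewrite (perm_sort_leP _ _ s_perm) (sort_le_id sorted_s).
by rewrite nth_rcons size_nseq lt_jn nth_nseq lt_jn.
Qed.

Section Game.
Variables (R : realFieldType) (N : finType) (kbar : nat).
Variables (dist : N -> 'I_kbar) (real : N -> bool) (q : nat).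

Lemma deviate_at (s : {ffun N -> bool}) i a : deviate s i a i = a.
Proof. by rewrite ffunE eqxx. Qed.

Lemma deviate_id (s : {ffun N -> bool}) i : deviate s i (s i) = s.
Proof. by apply/ffunP => j; rewrite ffunE; case: eqP => [->|]. Qed.

Lemma m_app_sigma_star k : m_app dist (sigma_star real) k = nR dist real k.
Proof. by apply: eq_card => j; rewrite !inE ffunE. Qed.

Lemma m_app_deviate_s1 (s : {ffun N -> bool}) i k : ~~ s i ->
  m_app dist (deviate s i true) k = (m_app dist s k + (dist i == k))%N.
Proof.
move=> not_si; rewrite /m_app.
have [<-|ik] := eqVneq (dist i) k.
  have -> : [set j | (dist j == dist i) && deviate s i true j] =
            i |: [set j | (dist j == dist i) && s j].
    apply/setP => j; rewrite !inE ffunE.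
    by case: (eqVneq j i) => [->|]; rewrite ?eqxx.
  by rewrite cardsU1 inE (negbTE not_si) andbF addnC.
rewrite addn0; apply: eq_card => j; rewrite !inE ffunE.
by case: (eqVneq j i) => [->|//]; rewrite (negbTE ik) (negbTE not_si).
Qed.

Lemma sel_prob_ge0 s k : 0 <= sel_prob R dist real q s k.
Proof. by rewrite /sel_prob; do 2 case: ifP => _ //; rewrite divr_ge0. Qed.

Lemma sel_prob_eq0 s k :
  rho_q R dist real q s < rho_k R dist real s k ->
  sel_prob R dist real q s k = 0.
Proof.
move=> lt_rho; rewrite /sel_prob /Cset /Tset !inE.
by rewrite ltNge (ltW lt_rho) /= eq_sym (lt_eqF lt_rho).
Qed.

Lemma rho_q_outlier s k0 (c : R) :
  (forall k, k != k0 -> rho_k R dist real s k = c) ->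
  c <= rho_k R dist real s k0 -> (0 < q < kbar)%N ->
  rho_q R dist real q s = c.
Proof.
move=> rho_c c_le /andP[q_gt0 q_lt].
apply: (@nth_sort_nseq_rcons _ _ _ _ (rho_k R dist real s k0) _ kbar.-1) => //.
  have k0_enum : k0 \in enum 'I_kbar by rewrite mem_enum.
  apply: (perm_trans (perm_map _ (perm_to_rem k0_enum))).
  rewrite perm_sym perm_rcons /= perm_cons.
  have /all_pred1P -> :
      all (pred1 c) [seq rho_k R dist real s k | k <- rem k0 (enum 'I_kbar)].
    apply/allP => x /mapP[k]; rewrite mem_rem_uniq ?enum_uniq //.
    by move=> /andP[k_neq _] ->; rewrite /= rho_c.
  by rewrite size_map size_rem // size_enum_ord.
by rewrite prednK // -ltnS prednK // (leq_trans _ q_lt).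
Qed.

Lemma sel_prob_deviate_decoy i :
  ~~ real i -> (forall k, 0 < nR dist real k)%N -> (0 < q < kbar)%N ->
  sel_prob R dist real q (deviate (sigma_star real) i true) (dist i) = 0.
Proof.
move=> decoy_i nR_gt0 q_range; set s := deviate _ i true.
have not_si : ~~ sigma_star real i by rewrite ffunE.
have rho_s k : rho_k R dist real s k =
    (nR dist real k + (dist i == k))%:R / (nR dist real k)%:R.
  by rewrite /rho_k m_app_deviate_s1 // m_app_sigma_star.
have nR_neq0 k : (nR dist real k)%:R != 0 :> R by rewrite pnatr_eq0 -lt0n.
have rho_gt1 : 1 < rho_k R dist real s (dist i).
  by rewrite rho_s eqxx natrD ltr_pdivlMr ?ltr0n // mul1r ltrDl ltr01.
apply: sel_prob_eq0; rewrite (@rho_q_outlier _ (dist i) 1) ?(ltW rho_gt1) //.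
by move=> k k_neq; rewrite rho_s eq_sym (negbTE k_neq) addn0 divff.
Qed.

Variables (V eps : R).

Lemma payoff_real_ge s i :
  real i -> 0 <= eps -> V <= payoff dist real q V eps s i.
Proof.
rewrite /payoff => -> eps_ge0; case: (s i) => //.
have := mulr_ge0 (sel_prob_ge0 s (dist i)) eps_ge0.
by move: (sel_prob _ _ _ _ _ _) => p; lra.
Qed.

End Game.

Theorem proposition2 (R : realFieldType) (N : finType) (kbar : nat)
    (dist : N -> 'I_kbar) (real : N -> bool) (q : nat) (V eps : R) :
  (1 < kbar)%N ->
  (forall k : 'I_kbar, (1 <= nR dist real k)%N) ->
  (forall k : 'I_kbar, (1 < nR dist real k + nD dist real k)%N) ->
  (1 <= q)%N -> (q <= kbar - 1)%N ->
  0 < V -> 0 < eps ->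
  nash_eq dist real q V eps (sigma_star real).
Proof.
move=> kbar_gt1 nR_gt0 _ q_gt0 q_le _ eps_gt0 i a.
have q_range : (0 < q < kbar)%N.
  by rewrite q_gt0 (leq_ltn_trans q_le) // subn1 ltn_predL ltnW.
have [->|] := eqVneq a (sigma_star real i); first by rewrite deviate_id.
rewrite ffunE; case: a; case real_i: (real i) => // _.
- rewrite /payoff deviate_at real_i sel_prob_deviate_decoy ?real_i //.
  by rewrite ffunE real_i; lra.
- by rewrite {1}/payoff deviate_at real_i payoff_real_ge // ltW.
Qed.
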